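(* Let $\varphi$ be any irrevocable (non-wasteful) distribution policy and suppose the characteristic function satisfies $v\in V_1$. Then the competitive ratio of $\varphi$ with respect to greedy players is $\alpha=1$; that is, for every $v\in V_1$ and every arrival order $\pi$, the coalition structure formed by greedy players maximizes social welfare.
   Context: Players: a finite set $N=\{a_1,\dots,a_n\}$. A characteristic function is $v:2^N\to\mathbb{R}_{\ge 0}$ with $v(\emptyset)=0$. There are fixed, known constants $0<\mathsf{min}\le\mathsf{max}$ and every $v$ considered is monotone and bounded: $\mathsf{min}\le v(S)\le v(T)\le\mathsf{max}$ for all nonempty $S\subseteq T\subseteq N$. For an integer $\delta\ge1$, $V_\delta$ denotes the set of such $v$ for which additionally $\delta\cdot\mathsf{min}\le\mathsf{max}<(\delta+1)\cdot\mathsf{min}$. A coalition structure is a partition $C$ of $N$; its social welfare is $\mathsf{SW}(C\mid v)=\sum_{S\in C}v(S)$. Online process: an arrival order is a permutation $\pi=(\pi_1,\dots,\pi_n)$ of $N$; player $\pi_t$ arrives at time $t$. For $S\subseteq N$, $\pi_{|S}$ denotes the players of $S$ in the relative order of $\pi$; $\pi_{|S}$ is a prefix of $\pi_{|T}$ if $S\subseteq T$ and the players of $S$ are the first $|S|$ players of $\pi_{|T}$. Let $C^{t-1}$ be the coalition structure of the players arrived before time $t$ ($C^0=\emptyset$). At time $t$, player $\pi_t$ either joins an existing coalition $S\in C^{t-1}$ or forms the new coalition $\{\pi_t\}$ (choice $S=\emptyset$); decisions are never revised. A distribution policy $\varphi$ assigns to every $S\subseteq N$ and order $\pi_{|S}$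 a vector $(\varphi_i(S,\pi_{|S}\mid v))_{i\in S}$, and is non-wasteful: $\sum_{i\in S}\varphi_i(S,\pi_{|S})=v(S)$. It is irrevocable if for every $\pi$, every $S\subseteq T\subseteq N$ with $\pi_{|S}$ a prefix of $\pi_{|T}$, and every $i\in S$, $\varphi_i(S,\pi_{|S})\le\varphi_i(T,\pi_{|T})$ (value given to a player is never reduced when later players join). Greedy players: player $\pi_t$ chooses $S^*\in\arg\max_{S\in C^{t-1}\cup\{\emptyset\}}\varphi_{\pi_t}(S\cup\{\pi_t\},\pi_{|S\cup\{\pi_t\}})$ (ties broken by a predetermined rule). $C_g(v,\pi\mid\varphi)$ denotes the final coalition structure so formed. The competitive ratio of $\varphi$ over a class of characteristic functions is $\alpha=\inf_{v,\pi}\mathsf{SW}(C_g(v,\pi\mid\varphi))/\max_C\mathsf{SW}(C\mid v)$, the infimum over $v$ in the class and all arrival orders $\pi$. *)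

From HB Require Import structures.
From mathcomp Require Import all_boot all_order all_algebra.
Set Implicit Arguments. Unset Strict Implicit. Unset Printing Implicit Defensive.
Import Order.TTheory GRing.Theory Num.Theory.
Local Open Scope ring_scope.

Section Coalition.
Variables (R : realFieldType) (T : finType).

Definition arrival_order (pi : seq T) : Prop := perm_eq pi (enum T).

Definition restr (pi : seq T) (S : {set T}) : seq T := [seq x <- pi | x \in S].

Definition char_fun_bounded (v : {set T} -> R) (mn mx : R) : Prop :=
  [/\ v set0 = 0, (forall S, 0 <= v S), 0 < mn, mn <= mx &
      forall S S' : {set T}, S != set0 -> S \subset S' -> [/\ mn <= v S, v S <= v S' & v S' <= mx]].

Definition in_V (delta : nat) (v : {set T} -> R) (mn mx : R) : Prop :=
  [/\ (1 <= delta)%N, char_fun_bounded v mn mx,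
      delta%:R * mn <= mx & mx < (delta.+1)%:R * mn].

(* A distribution policy: phi S o i = phi_i(S, o) where o = pi_{|S}. *)
Definition non_wasteful (v : {set T} -> R) (phi : {set T} -> seq T -> T -> R) : Prop :=
  forall pi, arrival_order pi -> forall S : {set T},
    \sum_(i in S) phi S (restr pi S) i = v S.

Definition irrevocable (phi : {set T} -> seq T -> T -> R) : Prop :=
  forall pi, arrival_order pi -> forall S S' : {set T}, S \subset S' ->
    prefix (restr pi S) (restr pi S') ->
    forall i, i \in S -> phi S (restr pi S) i <= phi S' (restr pi S') i.

Definition join_payoff (phi : {set T} -> seq T -> T -> R) (pi : seq T)
    (S : {set T}) (x : T) : R :=
  phi (x |: S) (restr pi (x |: S)) x.

(* One greedy step: x chooses a maximiser S among C and the empty set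
   (any maximiser: this covers every predetermined tie-breaking rule). *)
Definition greedy_step (phi : {set T} -> seq T -> T -> R) (pi : seq T)
    (C : {set {set T}}) (x : T) (C' : {set {set T}}) : Prop :=
  exists S : {set T}, [/\ S \in C \/ S = set0,
    (forall S0 : {set T}, S0 \in C \/ S0 = set0 ->
        join_payoff phi pi S0 x <= join_payoff phi pi S x) &
    C' = (x |: S) |: (C :\ S)].

(* greedy_run phi pi p C : C is a coalition structure obtainable by greedy
   players arriving in the order p (a prefix of the arrival order pi). *)
Inductive greedy_run (phi : {set T} -> seq T -> T -> R) (pi : seq T) :
    seq T -> {set {set T}} -> Prop :=
| greedy_nil : greedy_run phi pi [::] set0
| greedy_rcons p C x C' : greedy_run phi pi p C -> greedy_step phi pi C x C' ->
    greedy_run phi pi (rcons p x) C'.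

Definition SW (v : {set T} -> R) (C : {set {set T}}) : R := \sum_(S in C) v S.

End Coalition.

From HB Require Import structures.
From mathcomp Require Import all_boot all_order all_algebra.
From mathcomp Require Import lra.
Set Implicit Arguments. Unset Strict Implicit. Unset Printing Implicit Defensive.
Import Order.TTheory GRing.Theory Num.Theory.
Local Open Scope ring_scope.

(** In [V_1] we have [max < 2 min]. A newcomer joining a nonempty coalition
    [S] of earlier players can receive at most the marginal value
    [v (x |: S) - v S <= max - min < min <= v [set x]], because irrevocability
    forces the members of [S] to keep at least the [v S] they already shared.
    So every greedy player stays alone and the outcome is the structure of
    singletons. That structure is optimal: a block [B] of a partition with at
    least two players has [v B <= max < 2 min], which is at most the sum of the
    values of its singletons. *)

Definition singletons (T : finType) (A : {set T}) : {set {set T}} :=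
  [set [set y] | y in A].

Lemma SW_singletons (R : realFieldType) (T : finType) (v : {set T} -> R) (A : {set T}) :
  SW v (singletons A) = \sum_(i in A) v [set i].
Proof. by rewrite /SW big_imset //= => a b _ _ /set1_inj. Qed.

Lemma restr_setU1_last (T : finType) (pi p q : seq T) (x : T) (S : {set T}) :
  uniq pi -> pi = p ++ x :: q -> {subset S <= p} ->
  restr pi (x |: S) = rcons (restr pi S) x.
Proof.
move=> + Hsplit HS; rewrite Hsplit cat_uniq /= => /and4P [_ /norP [xNp Hpq] xNq _].
have xNS : x \notin S by apply: contra xNp => /HS.
have qNS z : z \in q -> z \notin S.
  by move=> zq; apply: contra Hpq => /HS zp; apply/hasP; exists z.
have filter_q_nil (A : {set T}) : {in q, forall z, z \notin A} -> [seq z <- q | z \in A] = [::].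
  by move=> HA; rewrite -(filter_pred0 q); apply: eq_in_filter => z /HA /negbTE.
have eq_filter_p : [seq z <- p | z \in x |: S] = [seq z <- p | z \in S].
  by apply: eq_in_filter => z zp; rewrite !inE; case: eqP => // zx; rewrite -zx zp in xNp.
rewrite /restr !filter_cat /= !inE eqxx (negbTE xNS) eq_filter_p /=.
rewrite !filter_q_nil ?cats0 ?cats1 // => z zq.
by rewrite !inE (negbTE (qNS z zq)) orbF; apply: contra xNq => /eqP <-.
Qed.

Lemma set1_neq0 (T : finType) (x : T) : [set x] != set0.
Proof. by apply/set0Pn; exists x; rewrite inE. Qed.

Section BoundedValues.
Variables (R : realFieldType) (T : finType) (v : {set T} -> R) (mn mx : R).
Hypothesis Hv : char_fun_bounded v mn mx.

Lemma bounded_ge_min (S : {set T}) : S != set0 -> mn <= v S.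
Proof. by case: Hv => _ _ _ _ Hb SN0; case: (Hb S S SN0 (subxx S)). Qed.

Lemma bounded_le_max (S : {set T}) : S != set0 -> v S <= mx.
Proof. by case: Hv => _ _ _ _ Hb SN0; case: (Hb S S SN0 (subxx S)). Qed.

Hypothesis Hmx : mx < 2 * mn.

Lemma le_sum_singletons (B : {set T}) : B != set0 -> v B <= \sum_(i in B) v [set i].
Proof.
move=> BN0; have [/eqP/cards1P [y ->] | B1] := eqVneq #|B| 1%N; first by rewrite big_set1.
have /card_gt1P [y [z [By Bz yz]]] : (1 < #|B|)%N.
  by rewrite ltn_neqAle eq_sym B1 card_gt0.
have vy : mn <= v [set y] := bounded_ge_min (set1_neq0 y).
have vz : mn <= v [set z] := bounded_ge_min (set1_neq0 z).
have rest_ge0 : 0 <= \sum_(i | (i \in B) && (i != y) && (i != z)) v [set i].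
  by apply: sumr_ge0 => i _; case: Hv.
rewrite (bigD1 y) //= (bigD1 z) /=; last by rewrite Bz eq_sym.
move: Hmx vy vz rest_ge0 (bounded_le_max BN0); lra.
Qed.

Lemma SW_le_sum_singletons (P : {set {set T}}) (A : {set T}) :
  partition P A -> SW v P <= \sum_(i in A) v [set i].
Proof.
case/and3P => /eqP <- Htriv P0; rewrite (big_trivIset _ Htriv) /SW.
apply: ler_sum => B BP; apply: le_sum_singletons.
by apply: contraNneq P0 => <-.
Qed.

End BoundedValues.

Section GreedyPlay.
Variables (R : realFieldType) (T : finType) (v : {set T} -> R) (mn mx : R).
Variables (phi : {set T} -> seq T -> T -> R) (pi : seq T).
Hypotheses (Hv : char_fun_bounded v mn mx) (Hmx : mx < 2 * mn).
Hypotheses (Hnw : non_wasteful v phi) (Hirr : irrevocable phi).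
Hypothesis Hpi : arrival_order pi.

Lemma join_payoff_set0 (x : T) : join_payoff phi pi set0 x = v [set x].
Proof. by rewrite /join_payoff setU0 -(Hnw Hpi [set x]) big_set1. Qed.

Lemma join_payoff_le_marginal (S : {set T}) (x : T) :
  x \notin S -> prefix (restr pi S) (restr pi (x |: S)) ->
  join_payoff phi pi S x <= v (x |: S) - v S.
Proof.
move=> xNS Hpre; rewrite /join_payoff -(Hnw Hpi (x |: S)) big_setU1 //= -(Hnw Hpi S).
rewrite -addrA lerDl subr_ge0.
by apply: ler_sum => i iS; apply: Hirr => //; apply: subsetU1.
Qed.

Lemma join_payoff_lt_alone (p q : seq T) (x : T) (S : {set T}) :
  pi = p ++ x :: q -> S != set0 -> {subset S <= p} ->
  join_payoff phi pi S x < join_payoff phi pi set0 x.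
Proof.
move=> Hsplit SN0 Sp.
have Hu : uniq pi by rewrite (perm_uniq Hpi) enum_uniq.
have xNp : x \notin p.
  by move: Hu; rewrite Hsplit cat_uniq => /and3P [_ /hasPn/(_ x (mem_head x q))].
have xNS : x \notin S := contra (@Sp x) xNp.
have Hpre : prefix (restr pi S) (restr pi (x |: S)).
  by rewrite (restr_setU1_last Hu Hsplit Sp) prefix_rcons.
have xSN0 : x |: S != set0 by apply/set0Pn; exists x; rewrite setU11.
rewrite join_payoff_set0; move: (join_payoff_le_marginal xNS Hpre) Hmx.
move: (bounded_ge_min Hv SN0) (bounded_ge_min Hv (set1_neq0 x)) (bounded_le_max Hv xSN0).
lra.
Qed.

Lemma greedy_run_singletons (p : seq T) (C : {set {set T}}) :
  greedy_run phi pi p C -> forall q, pi = p ++ q -> C = singletons [set:: p].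
Proof.
elim=> [|p0 C0 x C' _ IH [S [SC Smax ->]]] q Hsplit.
  by rewrite set_nil /singletons imset0.
have Hsplit' : pi = p0 ++ x :: q by rewrite Hsplit cat_rcons.
have EC := IH _ Hsplit'; subst C0.
have -> : S = set0.
  case: SC => [|//]; rewrite /singletons => /imsetP [y yp SE].
  have Sp : {subset S <= p0} by move=> z; rewrite SE inE => /eqP ->; rewrite inE in yp.
  have SN0 : S != set0 by rewrite SE set1_neq0.
  by have := Smax set0 (or_intror erefl); rewrite leNgt (join_payoff_lt_alone Hsplit' SN0 Sp).
have -> : singletons [set:: p0] :\ set0 = singletons [set:: p0].
  apply/setDidPl; rewrite disjoint_sym disjoints1.
  by apply/imsetP => -[y _ /esym/eqP]; rewrite (negbTE (set1_neq0 y)).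
rewrite setU0.
have -> : [set:: rcons p0 x] = x |: [set:: p0].
  by apply/setP => z; rewrite !inE mem_rcons in_cons.
by rewrite /singletons imsetU1.
Qed.

End GreedyPlay.

Theorem theorem1 (R : realFieldType) (T : finType) (v : {set T} -> R) (mn mx : R)
    (phi : {set T} -> seq T -> T -> R) :
  in_V 1 v mn mx -> non_wasteful v phi -> irrevocable phi ->
  forall (pi : seq T) (C : {set {set T}}),
    arrival_order pi -> greedy_run phi pi pi C ->
    forall P : {set {set T}}, partition P [set: T] -> SW v P <= SW v C.
Proof.
move=> [_ Hv _ Hmx] Hnw Hirr pi C Hpi Hrun P HP.
have -> : C = singletons [set: T].
  have -> : [set: T] = [set:: pi] by apply/setP => z; rewrite !inE (perm_mem Hpi) mem_enum.
  exact: greedy_run_singletons Hv Hmx Hnw Hirr Hpi _ _ Hrun [::] (esym (cats0 pi)).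
by rewrite SW_singletons; apply: SW_le_sum_singletons Hv Hmx _ _ HP.
Qed.
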